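(* Let $c(u),p(u),s(u)$ be arbitrary smooth functions. For every smooth function $f(u)$ define $H_f=\int h_f\,dx$ with $$h_f=f-\frac{\epsilon^2}{24}c\,f'''u_x^2+\epsilon^4\Big[\Big(p\,f'''+\frac{c^2f^{(4)}}{480}\Big)u_{xx}^2-\Big(\frac{c\,c''f^{(4)}}{1152}+\frac{c\,c'f^{(5)}}{1152}+\frac{c^2f^{(6)}}{3456}+\frac{p'f^{(4)}}{6}+\frac{p\,f^{(5)}}{6}-s\,f'''\Big)u_x^4\Big],$$ where $c=c(u)$, $p=p(u)$, $s=s(u)$, $f=f(u)$ and primes denote $d/du$. Then for any two smooth functions $f,g$, $$\{H_f,H_g\}=O(\epsilon^6),$$ i.e. $\mathcal E\big(\frac{\delta H_f}{\delta u(x)}\partial_x\frac{\delta H_g}{\delta u(x)}\big)=O(\epsilon^6)$. In particular, since $H_{u^3/6}=\int[\frac{u^3}{6}-\epsilon^2\frac{c}{24}u_x^2+\epsilon^4(p\,u_{xx}^2+s\,u_x^4)]dx$, every flow $u_s+\partial_x\frac{\delta H_f}{\delta u(x)}=0$ is, modulo $O(\epsilon^6)$, a symmetry of $u_t+\partial_x\frac{\delta H_{u^3/6}}{\delta u(x)}=0$. *)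

(* Formal variational calculus for one dependent variable u(x):
   - a "jet" j : nat -> R lists the values (u, u_x, u_xx, ...) = (j 0, j 1, j 2, ...);
   - a differential function is a map jet -> R (depending on finitely many jet entries);
   - quantities depending on the dispersive parameter epsilon are handled as formal
     power series in epsilon: a series h : nat -> (jet -> R), h n = coefficient of eps^n. *)
From Stdlib Require Import Reals.
From Coquelicot Require Import Coquelicot.
Open Scope R_scope.

Definition jet := nat -> R.

Definition smooth (f : R -> R) : Prop := forall (n : nat) (x : R), ex_derive_n f n x.

Definition dn (f : R -> R) (k : nat) : R -> R := Derive_n f k.

Definition upd (j : jet) (k : nat) (t : R) : jet :=
  fun i => if Nat.eqb i k then t else j i.

Definition pder (k : nat) (F : jet -> R) : jet -> R :=
  fun j => Derive (fun t => F (upd j k t)) (j k).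

(* total x-derivative: derivative of F along the shift vector (u_1, u_2, ...),
   i.e. D_x F = sum_k u_{k+1} dF/du_k for (C^1) differential functions *)
Definition Dx (F : jet -> R) : jet -> R :=
  fun j => Derive (fun t => F (fun i => j i + t * j (S i))) 0.

Fixpoint Dxn (k : nat) (F : jet -> R) : jet -> R :=
  match k with O => F | S k' => Dx (Dxn k' F) end.

(* Euler operator (variational derivative) for differential functions of order <= m:
   E_m F = sum_{k=0}^m (-D_x)^k (dF/du_k) *)
Fixpoint euler_aux (m : nat) (F : jet -> R) : jet -> R :=
  match m with
  | O => pder 0 F
  | S m' => fun j => euler_aux m' F j + (-1) ^ m * Dxn m (pder m F) j
  end.
Definition euler (m : nat) (F : jet -> R) : jet -> R := euler_aux m F.

Definition ser := nat -> jet -> R.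

Definition sDx (h : ser) : ser := fun n => Dx (h n).
Definition svar (m : nat) (h : ser) : ser := fun n => euler m (h n).
Definition smul (a b : ser) : ser :=
  fun n j => sum_f_R0 (fun i => a i j * b (n - i)%nat j) n.

Definition hdens (c p s f : R -> R) : ser :=
  fun n j =>
    let u := j 0%nat in
    let ux := j 1%nat in
    let uxx := j 2%nat in
    match n with
    | 0%nat => f u
    | 2%nat => - (1/24) * c u * dn f 3 u * ux ^ 2
    | 4%nat =>
        (p u * dn f 3 u + (c u) ^ 2 * dn f 4 u / 480) * uxx ^ 2
        - ( c u * dn c 2 u * dn f 4 u / 1152
          + c u * dn c 1 u * dn f 5 u / 1152
          + (c u) ^ 2 * dn f 6 u / 3456
          + dn p 1 u * dn f 4 u / 6
          + p u * dn f 5 u / 6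
          - s u * dn f 3 u ) * ux ^ 4
    | _ => 0
    end.

(* density of the Poisson bracket {H_f, H_g}:
   (delta H_f / delta u) * d/dx (delta H_g / delta u); h_f, h_g have order 2,
   and the resulting density has order 5. *)
Definition bracket_dens (c p s f g : R -> R) : ser :=
  smul (svar 2 (hdens c p s f)) (sDx (svar 2 (hdens c p s g))).

(* Every density involved is a polynomial with rational coefficients in the
   jet coordinates u_k and in the derivatives c^(d)(u), p^(d)(u), s^(d)(u),
   f^(d)(u), g^(d)(u).  Partial derivatives, D_x and hence the Euler operator
   act on such polynomials by the Leibniz rule on monomials and the chain rule
   on the atoms, so they can be mirrored by formal operations on a symbolic
   representation whose evaluation commutes with them.  The Euler derivative
   of each coefficient of eps^n, n < 6, of the bracket density is then computed
   symbolically and found to be the zero polynomial. *)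
From Pilot Require Import Defs.
From Stdlib Require Import Reals.
From Coquelicot Require Import Coquelicot.
From Stdlib Require Import QArith Qreals List FunctionalExtensionality Lia.
Import ListNotations.
Open Scope R_scope.

(** * Symbolic differential polynomials *)

(* [FunDer i d] stands for the d-th derivative of the i-th named function,
   evaluated at u = u_0. *)
Inductive atom := JetVar (k : nat) | FunDer (i d : nat).

Definition atom_eqb (a b : atom) : bool :=
  match a, b with
  | JetVar k, JetVar k' => Nat.eqb k k'
  | FunDer i d, FunDer i' d' => Nat.eqb i i' && Nat.eqb d d'
  | _, _ => false
  end.

Definition atom_leb (a b : atom) : bool :=
  match a, b with
  | JetVar k, JetVar k' => Nat.leb k k'
  | JetVar _, FunDer _ _ => true
  | FunDer _ _, JetVar _ => false
  | FunDer i d, FunDer i' d' => Nat.ltb i i' || (Nat.eqb i i' && Nat.leb d d')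
  end.

(* Monomials are kept sorted by [atom_leb], so that equal monomials are
   syntactically equal and like terms of a polynomial can be merged. *)
Definition monomial := list atom.
Definition poly := list (Q * monomial).

Fixpoint mono_insert (a : atom) (m : monomial) : monomial :=
  match m with
  | nil => [a]
  | b :: m' => if atom_leb a b then a :: m else b :: mono_insert a m'
  end.

Definition mono_mul (m1 m2 : monomial) : monomial := fold_right mono_insert m2 m1.

Fixpoint mono_eqb (m1 m2 : monomial) : bool :=
  match m1, m2 with
  | nil, nil => true
  | a :: m1', b :: m2' => atom_eqb a b && mono_eqb m1' m2'
  | _, _ => false
  end.

Fixpoint poly_add_term (q : Q) (m : monomial) (P : poly) : poly :=
  match P with
  | nil => if Qeq_bool q 0 then nil else [(q, m)]
  | (q', m') :: P' =>
      if mono_eqb m m' then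
        let r := Qred (q + q') in if Qeq_bool r 0 then P' else (r, m') :: P'
      else (q', m') :: poly_add_term q m P'
  end.

Definition poly_add (P P' : poly) : poly :=
  fold_right (fun t acc => poly_add_term (fst t) (snd t) acc) P' P.

Definition poly_scale (q : Q) (P : poly) : poly :=
  map (fun t => (Qred (q * fst t), snd t)) P.

Definition poly_mul_term (q : Q) (m : monomial) (P : poly) : poly :=
  map (fun t => (Qred (q * fst t), mono_mul m (snd t))) P.

Definition poly_mul (P P' : poly) : poly :=
  fold_right (fun t acc => poly_add (poly_mul_term (fst t) (snd t) P') acc) nil P.

Definition poly_const (q : Q) : poly := [(q, nil)].
Definition poly_atom (a : atom) : poly := [(1%Q, [a])].

Fixpoint poly_pow (P : poly) (n : nat) : poly :=
  match n with O => poly_const 1 | S n' => poly_mul P (poly_pow P n') end.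

Fixpoint poly_sum (F : nat -> poly) (n : nat) : poly :=
  match n with O => F O | S n' => poly_add (poly_sum F n') (F n) end.

Fixpoint mono_derive (d : atom -> poly) (m : monomial) : poly :=
  match m with
  | nil => nil
  | a :: m' => poly_add (poly_mul (d a) [(1%Q, m')])
                        (poly_mul (poly_atom a) (mono_derive d m'))
  end.

Definition poly_derive (d : atom -> poly) (P : poly) : poly :=
  fold_right (fun t acc => poly_add (poly_scale (fst t) (mono_derive d (snd t))) acc)
             nil P.

Definition atom_pder (k : nat) (a : atom) : poly :=
  match a with
  | JetVar k' => if Nat.eqb k' k then poly_const 1 else nil
  | FunDer i d => if Nat.eqb k 0 then poly_atom (FunDer i (S d)) else nil
  end.

Definition atom_Dx (a : atom) : poly :=
  match a with
  | JetVar k => poly_atom (JetVar (S k))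
  | FunDer i d => [(1%Q, [JetVar 1; FunDer i (S d)])]
  end.

Definition poly_pder (k : nat) : poly -> poly := poly_derive (atom_pder k).
Definition poly_Dx : poly -> poly := poly_derive atom_Dx.
Definition poly_Dxn (k : nat) (P : poly) : poly := Nat.iter k poly_Dx P.

Fixpoint neg_one_pow (n : nat) : Q := match n with O => 1 | S n' => - neg_one_pow n' end.

Fixpoint poly_euler (m : nat) (P : poly) : poly :=
  match m with
  | O => poly_pder 0 P
  | S m' => poly_add (poly_euler m' P)
                     (poly_scale (neg_one_pow m) (poly_Dxn m (poly_pder m P)))
  end.

(** * Evaluation *)

Lemma atom_eqb_eq (a b : atom) : atom_eqb a b = true -> a = b.
Proof.
  destruct a, b; simpl; intro H; try discriminate.
  - now apply Nat.eqb_eq in H as ->.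
  - apply andb_prop in H as [Hi Hd].
    now apply Nat.eqb_eq in Hi as ->; apply Nat.eqb_eq in Hd as ->.
Qed.

Lemma mono_eqb_eq (m1 m2 : monomial) : mono_eqb m1 m2 = true -> m1 = m2.
Proof.
  revert m2; induction m1 as [|a m1 IH]; intros [|b m2]; simpl; intro H;
    try discriminate; auto.
  apply andb_prop in H as [Ha Hm].
  now rewrite (atom_eqb_eq _ _ Ha), (IH _ Hm).
Qed.

Lemma Q2R_Qred (q : Q) : Q2R (Qred q) = Q2R q.
Proof. apply Qeq_eqR, Qred_correct. Qed.

Lemma Q2R_Qeq_bool0 (q : Q) : Qeq_bool q 0 = true -> Q2R q = 0.
Proof.
  intro H; apply Qeq_bool_eq, Qeq_eqR in H; rewrite H; unfold Q2R; simpl; ring.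
Qed.

Lemma Q2R_1 : Q2R 1 = 1.
Proof. unfold Q2R; simpl; field. Qed.

Lemma Q2R_neg_one_pow (n : nat) : Q2R (neg_one_pow n) = (-1) ^ n.
Proof. induction n; simpl; [apply Q2R_1 | rewrite Q2R_opp, IHn; ring]. Qed.

Lemma Q2R_Qmake (a : Z) (b : positive) : Q2R (Qmake a b) = IZR a / IZR (Zpos b).
Proof. reflexivity. Qed.

Section Evaluation.

Variable fs : nat -> R -> R.

Definition eval_atom (j : jet) (a : atom) : R :=
  match a with JetVar k => j k | FunDer i d => Derive_n (fs i) d (j 0%nat) end.

Fixpoint eval_mono (m : monomial) (j : jet) : R :=
  match m with nil => 1 | a :: m' => eval_atom j a * eval_mono m' j end.

Fixpoint eval_poly (P : poly) (j : jet) : R :=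
  match P with nil => 0 | t :: P' => Q2R (fst t) * eval_mono (snd t) j + eval_poly P' j end.

Lemma eval_mono_insert (a : atom) (m : monomial) (j : jet) :
  eval_mono (mono_insert a m) j = eval_atom j a * eval_mono m j.
Proof.
  induction m as [|b m IH]; simpl; [ring|].
  destruct (atom_leb a b); simpl; [ring | rewrite IH; ring].
Qed.

Lemma eval_mono_mul (m1 m2 : monomial) (j : jet) :
  eval_mono (mono_mul m1 m2) j = eval_mono m1 j * eval_mono m2 j.
Proof.
  induction m1 as [|a m1 IH]; simpl; [ring|].
  unfold mono_mul in *; simpl; rewrite eval_mono_insert, IH; ring.
Qed.

Lemma eval_poly_add_term (q : Q) (m : monomial) (P : poly) (j : jet) :
  eval_poly (poly_add_term q m P) j = Q2R q * eval_mono m j + eval_poly P j.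
Proof.
  induction P as [|[q' m'] P IH]; cbn [poly_add_term eval_poly fst snd].
  - destruct (Qeq_bool q 0) eqn:Hq; cbn [eval_poly fst snd].
    + rewrite (Q2R_Qeq_bool0 _ Hq); ring.
    + ring.
  - destruct (mono_eqb m m') eqn:Hm; cbn [eval_poly fst snd].
    + apply mono_eqb_eq in Hm as <-.
      destruct (Qeq_bool (Qred (q + q')) 0) eqn:Hr; cbn [eval_poly fst snd].
      * apply Q2R_Qeq_bool0 in Hr; rewrite Q2R_Qred, Q2R_plus in Hr.
        rewrite <- Rplus_assoc, <- Rmult_plus_distr_r, Hr; ring.
      * rewrite Q2R_Qred, Q2R_plus; ring.
    + rewrite IH; ring.
Qed.

Lemma eval_poly_add (P P' : poly) (j : jet) :
  eval_poly (poly_add P P') j = eval_poly P j + eval_poly P' j.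
Proof.
  induction P as [|t P IH]; [simpl; ring|].
  change (poly_add (t :: P) P') with (poly_add_term (fst t) (snd t) (poly_add P P')).
  rewrite eval_poly_add_term, IH; simpl; ring.
Qed.

Lemma eval_poly_scale (q : Q) (P : poly) (j : jet) :
  eval_poly (poly_scale q P) j = Q2R q * eval_poly P j.
Proof.
  induction P as [|t P IH]; unfold poly_scale in *; cbn [map eval_poly fst snd]; [ring|].
  rewrite IH, Q2R_Qred, Q2R_mult; ring.
Qed.

Lemma eval_poly_mul_term (q : Q) (m : monomial) (P : poly) (j : jet) :
  eval_poly (poly_mul_term q m P) j = Q2R q * eval_mono m j * eval_poly P j.
Proof.
  induction P as [|t P IH]; unfold poly_mul_term in *; cbn [map eval_poly fst snd]; [ring|].
  rewrite IH, Q2R_Qred, Q2R_mult, eval_mono_mul; ring.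
Qed.

Lemma eval_poly_mul (P P' : poly) (j : jet) :
  eval_poly (poly_mul P P') j = eval_poly P j * eval_poly P' j.
Proof.
  induction P as [|t P IH]; [simpl; ring|].
  change (poly_mul (t :: P) P')
    with (poly_add (poly_mul_term (fst t) (snd t) P') (poly_mul P P')).
  rewrite eval_poly_add, eval_poly_mul_term, IH; simpl; ring.
Qed.

Lemma eval_poly_atom (a : atom) (j : jet) : eval_poly (poly_atom a) j = eval_atom j a.
Proof. simpl; rewrite Q2R_1; ring. Qed.

Lemma eval_poly_pow (P : poly) (n : nat) (j : jet) :
  eval_poly (poly_pow P n) j = eval_poly P j ^ n.
Proof.
  induction n; simpl; [rewrite Q2R_1; ring | rewrite eval_poly_mul, IHn; ring].
Qed.

Lemma eval_poly_sum (F : nat -> poly) (n : nat) (j : jet) :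
  eval_poly (poly_sum F n) j = sum_f_R0 (fun i => eval_poly (F i) j) n.
Proof. induction n; simpl; [easy | rewrite eval_poly_add, IHn; easy]. Qed.

Section DerivativeAlongPath.

Variables (path : R -> jet) (t0 : R) (d : atom -> poly).
Hypothesis d_atom :
  forall a, is_derive (fun t => eval_atom (path t) a) t0 (eval_poly (d a) (path t0)).

Lemma is_derive_eval_mono (m : monomial) :
  is_derive (fun t => eval_mono m (path t)) t0 (eval_poly (mono_derive d m) (path t0)).
Proof.
  induction m as [|a m IH]; cbn [eval_mono mono_derive].
  - exact (is_derive_const _ _).
  - replace (eval_poly _ _)
      with (eval_poly (d a) (path t0) * eval_mono m (path t0)
            + eval_atom (path t0) a * eval_poly (mono_derive d m) (path t0)).
    + apply (is_derive_mult (fun t => eval_atom (path t) a)); auto.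
      intros; apply Rmult_comm.
    + rewrite eval_poly_add, !eval_poly_mul; simpl; rewrite Q2R_1; ring.
Qed.

Lemma is_derive_eval_poly (P : poly) :
  is_derive (fun t => eval_poly P (path t)) t0 (eval_poly (poly_derive d P) (path t0)).
Proof.
  induction P as [|[q m] P IH]; simpl.
  - exact (is_derive_const _ _).
  - replace (eval_poly _ _)
      with (Q2R q * eval_poly (mono_derive d m) (path t0)
            + eval_poly (poly_derive d P) (path t0)).
    + apply (is_derive_plus (fun t => Q2R q * eval_mono m (path t))); auto.
      apply is_derive_scal, is_derive_eval_mono.
    + change (poly_derive d ((q, m) :: P))
        with (poly_add (poly_scale q (mono_derive d m)) (poly_derive d P)).
      now rewrite eval_poly_add, eval_poly_scale.
Qed.

End DerivativeAlongPath.

Hypothesis fs_smooth : forall i, smooth (fs i).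

Lemma is_derive_Derive_n (i d : nat) (x : R) :
  is_derive (Derive_n (fs i) d) x (Derive_n (fs i) (S d) x).
Proof. apply Derive_correct, (fs_smooth i (S d) x). Qed.

Lemma pder_eval_poly (k : nat) (P : poly) :
  pder k (eval_poly P) = eval_poly (poly_pder k P).
Proof.
  apply functional_extensionality; intro j; unfold pder.
  apply is_derive_unique.
  assert (upd_self : upd j k (j k) = j).
  { apply functional_extensionality; intro i; unfold upd.
    now destruct (Nat.eqb_spec i k) as [->|]. }
  replace (eval_poly (poly_pder k P) j) with (eval_poly (poly_pder k P) (upd j k (j k)))
    by now rewrite upd_self.
  apply (is_derive_eval_poly (upd j k)); rewrite upd_self.
  intros [k'|i d]; cbn [eval_atom atom_pder]; unfold upd.
  - destruct (Nat.eqb k' k); cbn [poly_const eval_poly eval_mono fst snd].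
    + rewrite Q2R_1, Rmult_1_r, Rplus_0_r; exact (is_derive_id _).
    + exact (is_derive_const _ _).
  - destruct k as [|k]; cbn [Nat.eqb poly_atom eval_poly eval_mono eval_atom fst snd].
    + rewrite Q2R_1, Rmult_1_l, Rmult_1_r, Rplus_0_r; apply is_derive_Derive_n.
    + exact (is_derive_const _ _).
Qed.

Lemma Dx_eval_poly (P : poly) : Defs.Dx (eval_poly P) = eval_poly (poly_Dx P).
Proof.
  apply functional_extensionality; intro j; unfold Defs.Dx.
  apply is_derive_unique.
  assert (shift0 : (fun i => j i + 0 * j (S i)) = j).
  { apply functional_extensionality; intro i; ring. }
  replace (eval_poly (poly_Dx P) j)
    with (eval_poly (poly_Dx P) (fun i => j i + 0 * j (S i))) by now rewrite shift0.
  apply (is_derive_eval_poly (fun t i => j i + t * j (S i))); rewrite shift0.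
  assert (shift_line : forall k,
             is_derive (fun t => j k + t * j (S k)) 0 (j (S k))).
  { intro k; auto_derive; [easy | ring]. }
  intros [k|i d]; cbn [eval_atom atom_Dx poly_atom eval_poly eval_mono fst snd];
    rewrite Q2R_1.
  - rewrite !Rmult_1_r, Rplus_0_r, Rmult_1_l; apply shift_line.
  - replace (_ * _ + 0)
      with (scal (j 1%nat) (Derive_n (fs i) (S d) (j 0%nat + 0 * j 1%nat)))
      by (rewrite Rmult_0_l, Rplus_0_r; unfold scal; simpl; unfold mult; simpl; ring).
    apply (is_derive_comp (Derive_n (fs i) d) (fun t => j 0%nat + t * j 1%nat)).
    + apply is_derive_Derive_n.
    + apply shift_line.
Qed.

Lemma Dxn_eval_poly (k : nat) (P : poly) :
  Dxn k (eval_poly P) = eval_poly (poly_Dxn k P).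
Proof. induction k; simpl; [easy | now rewrite IHk, Dx_eval_poly]. Qed.

Lemma euler_eval_poly (m : nat) (P : poly) :
  euler m (eval_poly P) = eval_poly (poly_euler m P).
Proof.
  unfold euler; induction m as [|m IH]; [apply pder_eval_poly|].
  apply functional_extensionality; intro j; cbn [euler_aux poly_euler].
  rewrite IH, pder_eval_poly, Dxn_eval_poly, eval_poly_add, eval_poly_scale, Q2R_neg_one_pow.
  reflexivity.
Qed.

End Evaluation.

(* The named functions are indexed as c = 0, p = 1, s = 2, f = 3, g = 4. *)
Definition fun_env (c p s f g : R -> R) (i : nat) : R -> R :=
  match i with 0%nat => c | 1%nat => p | 2%nat => s | 3%nat => f | _ => g end.

Definition fun_der (i d : nat) : poly := poly_atom (FunDer i d).

Definition hdens_poly (i n : nat) : poly :=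
  match n with
  | 0%nat => fun_der i 0
  | 2%nat => poly_scale (-1 # 24) (poly_mul (fun_der 0 0)
               (poly_mul (fun_der i 3) (poly_pow (poly_atom (JetVar 1)) 2)))
  | 4%nat =>
      poly_add
        (poly_mul (poly_add (poly_mul (fun_der 1 0) (fun_der i 3))
                            (poly_scale (1 # 480) (poly_mul (poly_pow (fun_der 0 0) 2) (fun_der i 4))))
                  (poly_pow (poly_atom (JetVar 2)) 2))
        (poly_scale (-1) (poly_mul
           (poly_add (poly_scale (1 # 1152) (poly_mul (fun_der 0 0) (poly_mul (fun_der 0 2) (fun_der i 4))))
           (poly_add (poly_scale (1 # 1152) (poly_mul (fun_der 0 0) (poly_mul (fun_der 0 1) (fun_der i 5))))
           (poly_add (poly_scale (1 # 3456) (poly_mul (poly_pow (fun_der 0 0) 2) (fun_der i 6)))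
           (poly_add (poly_scale (1 # 6) (poly_mul (fun_der 1 1) (fun_der i 4)))
           (poly_add (poly_scale (1 # 6) (poly_mul (fun_der 1 0) (fun_der i 5)))
                     (poly_scale (-1) (poly_mul (fun_der 2 0) (fun_der i 3))))))))
           (poly_pow (poly_atom (JetVar 1)) 4)))
  | _ => nil
  end.

Definition bracket_poly (n : nat) : poly :=
  poly_sum (fun i => poly_mul (poly_euler 2 (hdens_poly 3 i))
                              (poly_Dx (poly_euler 2 (hdens_poly 4 (n - i))))) n.

Lemma hdens_eval_poly (fs : nat -> R -> R) (c p s F : R -> R) (i : nat) :
  fs 0%nat = c -> fs 1%nat = p -> fs 2%nat = s -> fs i = F ->
  hdens c p s F = fun n => eval_poly fs (hdens_poly i n).
Proof.
  intros Hc Hp Hs HF.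
  apply functional_extensionality; intro n; apply functional_extensionality; intro j.
  destruct n as [|[|[|[|[|n]]]]]; cbv beta iota delta [hdens hdens_poly];
    unfold fun_der;
    repeat rewrite ?eval_poly_add, ?eval_poly_mul, ?eval_poly_scale, ?eval_poly_atom,
            ?eval_poly_pow;
    cbn [eval_atom eval_poly]; rewrite ?Hc, ?Hp, ?Hs, ?HF; unfold dn;
    rewrite ?Q2R_Qmake; try reflexivity.
  all: cbn [Derive_n]; field.
Qed.

Lemma poly_euler_bracket_poly (n : nat) :
  (n < 6)%nat -> poly_euler 5 (bracket_poly n) = nil.
Proof.
  intro Hn.
  do 6 (destruct n as [|n]; [vm_compute; reflexivity|]).
  lia.
Qed.

Lemma bracket_dens_eval_poly (c p s f g : R -> R) :
  (forall i, smooth (fun_env c p s f g i)) ->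
  bracket_dens c p s f g = fun n => eval_poly (fun_env c p s f g) (bracket_poly n).
Proof.
  set (fs := fun_env c p s f g); intro fs_smooth.
  apply functional_extensionality; intro n; apply functional_extensionality; intro j.
  unfold bracket_dens, smul, svar, sDx.
  rewrite (hdens_eval_poly fs c p s f 3), (hdens_eval_poly fs c p s g 4) by reflexivity.
  unfold bracket_poly; rewrite eval_poly_sum; apply sum_eq; intros i _.
  now rewrite eval_poly_mul, !(euler_eval_poly fs fs_smooth), (Dx_eval_poly fs fs_smooth).
Qed.

Theorem lemma2p3 (c p s f g : R -> R) :
  smooth c -> smooth p -> smooth s -> smooth f -> smooth g ->
  forall (n : nat), (n < 6)%nat ->
  forall j : jet, euler 5 (bracket_dens c p s f g n) j = 0.
Proof.
  intros Hc Hp Hs Hf Hg n Hn j.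
  assert (fs_smooth : forall i, smooth (fun_env c p s f g i))
    by (intros [|[|[|[|i]]]]; simpl; auto).
  rewrite (bracket_dens_eval_poly c p s f g fs_smooth), (euler_eval_poly _ fs_smooth).
  now rewrite poly_euler_bracket_poly.
Qed.
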